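(* Assume $n\ge 2$ and $\chi\neq\{0\}$. The reshuffling property and the strongly aggregate contributions property are independent: there exists a risk-sharing rule on $\chi^n$ that satisfies the reshuffling property but does not have strongly aggregate contributions, and there exists a risk-sharing rule on $\chi^n$ that has strongly aggregate contributions but does not satisfy the reshuffling property.
   Context: Fix a probability space $(\Omega,\mathcal{F},\mathbb{P})$ and an integer $n$. Let $\chi$ be a convex cone of non-negative random variables on this space (closed under addition and under multiplication by positive scalars) with $0\in\chi$. Equalities between random variables are understood almost surely. A pool is a vector $\boldsymbol{X}=(X_1,\ldots,X_n)\in\chi^n$, with aggregate loss $S_{\boldsymbol{X}}=\sum_{i=1}^n X_i$. A risk-sharing (RS) rule is a mapping $\boldsymbol{C}$ assigning to every pool $\boldsymbol{X}\in\chi^n$ a vector $\boldsymbol{C}[\boldsymbol{X}]=(C_1[\boldsymbol{X}],\ldots,C_n[\boldsymbol{X}])$ of real-valued random variables satisfying $\sum_{i=1}^n C_i[\boldsymbol{X}]=S_{\boldsymbol{X}}$. For a permutation $\pi$ of $\{1,\ldots,n\}$, $\boldsymbol{X}^\pi=(X_{\pi(1)},\ldots,X_{\pi(n)})$. Reshuffling property: $C_i[\boldsymbol{X}^\pi]=C_{\pi(i)}[\boldsymbol{X}]$ for all pools $\boldsymbol{X}$, permutations $\pi$ and indices $i$. Strongly aggregate contributions: there exists a single function $\mathbf{h}=(h_1,\ldots,h_n):\mathbb{R}\to\mathbb{R}^n$ (the same for all pools) such that $C_i[\boldsymbol{X}]=h_i(S_{\boldsymbol{X}})$ for every pool $\boldsymbol{X}$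 and every $i$. *)

From HB Require Import structures.
From mathcomp Require Import all_boot all_order all_algebra all_fingroup.
From mathcomp Require Import all_classical all_reals all_analysis.
Set Implicit Arguments. Unset Strict Implicit. Unset Printing Implicit Defensive.
Import Order.TTheory GRing.Theory Num.Theory.
Local Open Scope ring_scope.
Local Open Scope classical_set_scope.

Section RiskSharing.
Context (d : measure_display) (T : measurableType d) (R : realType)
  (P : probability T R) (n : nat).

Definition aeq (f g : T -> R) : Prop := {ae P, forall w, f w = g w}.

Definition is_cone (chi : set (T -> R)) : Prop :=
  [/\ (forall X, chi X -> measurable_fun setT X /\ (forall w, 0 <= X w)),
      chi (fun _ => 0),
      (forall X Y, chi X -> chi Y -> chi (fun w => X w + Y w)) &
      (forall (c : R) X, 0 < c -> chi X -> chi (fun w => c * X w))].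

Definition is_pool (chi : set (T -> R)) (X : 'I_n -> T -> R) : Prop :=
  forall i, chi (X i).

Definition aggregate (X : 'I_n -> T -> R) : T -> R :=
  fun w => \sum_(i < n) X i w.

Definition reshuffle (X : 'I_n -> T -> R) (s : 'S_n) : 'I_n -> T -> R :=
  fun i => X (s i).

Definition is_RS_rule (chi : set (T -> R))
  (C : ('I_n -> T -> R) -> 'I_n -> T -> R) : Prop :=
  forall X, is_pool chi X ->
    (forall i, measurable_fun setT (C X i)) /\
    aeq (fun w => \sum_(i < n) C X i w) (aggregate X).

Definition reshuffling_property (chi : set (T -> R))
  (C : ('I_n -> T -> R) -> 'I_n -> T -> R) : Prop :=
  forall X (s : 'S_n) (i : 'I_n), is_pool chi X ->
    aeq (C (reshuffle X s) i) (C X (s i)).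

Definition strongly_aggregate (chi : set (T -> R))
  (C : ('I_n -> T -> R) -> 'I_n -> T -> R) : Prop :=
  exists h : R -> 'I_n -> R, forall X (i : 'I_n), is_pool chi X ->
    aeq (C X i) (fun w => h (aggregate X w) i).

End RiskSharing.

From HB Require Import structures.
From mathcomp Require Import all_boot all_order all_algebra all_fingroup.
From mathcomp Require Import all_classical all_reals all_analysis.
Set Implicit Arguments. Unset Strict Implicit. Unset Printing Implicit Defensive.
Import Order.TTheory GRing.Theory Num.Theory.
Local Open Scope ring_scope.
Local Open Scope classical_set_scope.

(* Fix a loss X in chi that is not a.s. 0 and two members i0 != i1. The
   rule "everyone keeps their own loss" reshuffles, but the pools in which only
   i0, resp. only i1, carries X have the same aggregate X while member i0 gets
   X in the first and 0 in the second, so no function of the aggregate fits.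
   The rule "i0 bears the whole aggregate" is a function of the aggregate, but
   swapping i0 and i1 in the first pool does not change the aggregate, so i0
   still gets X, whereas reshuffling demands what i1 got before, namely 0. *)

Section RiskSharingRules.
Context (d : measure_display) (T : measurableType d) (R : realType)
  (P : probability T R) (n : nat) (chi : set (T -> R)).
Hypothesis chi_cone : is_cone chi.

Lemma cone_measurable (X : T -> R) : chi X -> measurable_fun setT X.
Proof. by case: chi_cone => nonneg_meas _ _ _ /nonneg_meas[]. Qed.

Definition single_pool (j : 'I_n) (X : T -> R) : 'I_n -> T -> R :=
  fun i => if i == j then X else (fun _ => 0).

Lemma single_pool_is_pool (j : 'I_n) (X : T -> R) :
  chi X -> is_pool chi (single_pool j X).
Proof.
by case: chi_cone => _ chi0 _ _ chiX i; rewrite /single_pool; case: (i == j).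
Qed.

Lemma aggregate_single_pool (j : 'I_n) (X : T -> R) :
  aggregate (single_pool j X) =1 X.
Proof.
move=> w; rewrite /aggregate (bigD1 j) //= /single_pool eqxx big1 ?addr0 //.
by move=> i /negbTE ->.
Qed.

Lemma aggregate_reshuffle (X : 'I_n -> T -> R) (s : 'S_n) :
  aggregate (reshuffle X s) =1 aggregate X.
Proof.
by move=> w; rewrite /aggregate /reshuffle [RHS](reindex_inj (@perm_inj _ s)).
Qed.

Lemma strongly_aggregate_eq_aggregate
    (C : ('I_n -> T -> R) -> 'I_n -> T -> R) (X Y : 'I_n -> T -> R) (i : 'I_n) :
  strongly_aggregate P chi C -> is_pool chi X -> is_pool chi Y ->
  aggregate X =1 aggregate Y -> aeq P (C X i) (C Y i).
Proof.
move=> [h Ch] poolX poolY eqXY.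
apply: filterS2 (Ch X i poolX) (Ch Y i poolY) => w -> ->.
by rewrite eqXY.
Qed.

Definition own_loss_rule (X : 'I_n -> T -> R) : 'I_n -> T -> R := X.

Lemma own_loss_RS_rule : is_RS_rule P chi own_loss_rule.
Proof.
move=> X poolX; split; last exact: aeW.
by move=> i; exact: cone_measurable.
Qed.

Lemma own_loss_reshuffling : reshuffling_property P chi own_loss_rule.
Proof. by move=> X s i _; exact: aeW. Qed.

Lemma own_loss_not_strongly_aggregate (i0 i1 : 'I_n) (X : T -> R) :
  i0 != i1 -> chi X -> ~ aeq P X (fun _ => 0) ->
  ~ strongly_aggregate P chi own_loss_rule.
Proof.
move=> i01 chiX nullX sa; apply: nullX.
have := strongly_aggregate_eq_aggregate i0 sa (single_pool_is_pool i0 chiX)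
  (single_pool_is_pool i1 chiX).
rewrite /own_loss_rule /single_pool eqxx (negbTE i01); apply.
by move=> w; rewrite !aggregate_single_pool.
Qed.

Definition bear_all_rule (j : 'I_n) (X : 'I_n -> T -> R) : 'I_n -> T -> R :=
  fun i w => if i == j then aggregate X w else 0.

Lemma bear_all_RS_rule (j : 'I_n) : is_RS_rule P chi (bear_all_rule j).
Proof.
move=> X poolX; split.
  move=> i; rewrite /bear_all_rule; case: (i == j); last exact: measurable_cst.
  by apply: measurable_sum => k; exact: cone_measurable.
apply: aeW => w; rewrite (bigD1 j) //= /bear_all_rule eqxx big1 ?addr0 //.
by move=> i /negbTE ->.
Qed.

Lemma bear_all_strongly_aggregate (j : 'I_n) :
  strongly_aggregate P chi (bear_all_rule j).
Proof.
by exists (fun s i => if i == j then s else 0) => X i _; exact: aeW.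
Qed.

Lemma bear_all_not_reshuffling (j k : 'I_n) (X : T -> R) :
  j != k -> chi X -> ~ aeq P X (fun _ => 0) ->
  ~ reshuffling_property P chi (bear_all_rule j).
Proof.
move=> jk chiX nullX reshuffling; apply: nullX.
have := reshuffling _ (tperm j k) j (single_pool_is_pool j chiX).
rewrite tpermL /bear_all_rule eqxx eq_sym (negbTE jk); apply: filterS => w.
by rewrite aggregate_reshuffle aggregate_single_pool.
Qed.

End RiskSharingRules.

Theorem proposition3 (d : measure_display) (T : measurableType d)
  (R : realType) (P : probability T R) (n : nat) (chi : set (T -> R)) :
  (1 < n)%N ->
  is_cone chi ->
  (exists X, chi X /\ ~ aeq P X (fun _ => 0)) ->
  (exists C : ('I_n -> T -> R) -> 'I_n -> T -> R, is_RS_rule P chi C /\ reshuffling_property P chi C /\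
             ~ strongly_aggregate P chi C) /\
  (exists C : ('I_n -> T -> R) -> 'I_n -> T -> R, is_RS_rule P chi C /\ strongly_aggregate P chi C /\
             ~ reshuffling_property P chi C).
Proof.
move=> n_gt1 chi_cone [X [chiX nullX]].
pose i0 : 'I_n := Ordinal (ltn_trans (ltnSn 0) n_gt1).
pose i1 : 'I_n := Ordinal n_gt1.
have i01 : i0 != i1 by [].
split.
- exists (@own_loss_rule _ T R n); split; first exact: own_loss_RS_rule.
  split; first exact: own_loss_reshuffling.
  exact: own_loss_not_strongly_aggregate i01 chiX nullX.
- exists (@bear_all_rule _ T R n i0); split; first exact: bear_all_RS_rule.
  split; first exact: bear_all_strongly_aggregate.
  exact: bear_all_not_reshuffling i01 chiX nullX.
Qed.
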